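(* The assignment $P(x_1,\dots,x_k)\mapsto\mathfrak q^{-\frac{k(k-1)}2}\prod_{1\le r\ne s\le k}\frac{x_r-x_s}{x_r-\mathfrak q^{-1}x_s}\cdot P(x_1^{-1},\dots,x_k^{-1})$ (for $P\in\mathbb S_k$, all $k$) defines an algebra isomorphism $\eta:\mathbb S\to\mathbb S^{\mathrm{DFK}}$, which restricts to an algebra isomorphism $S\to S^{\mathrm{DFK}}$.
   Context: Let $\mathfrak q,\mathfrak t\in\mathbb C^\times$ be such that $q_1=\mathfrak q$, $q_2=1/\mathfrak t$, $q_3=\mathfrak t/\mathfrak q$ are not roots of unity. $\mathbb S=\bigoplus_{k\ge0}\mathbb S_k$ with $\mathbb S_k$ the space of $f(x_1,\dots,x_k)/\prod_{1\le r\ne s\le k}(x_r-x_s)$, $f\in\mathbb C[x_1^{\pm1},\dots,x_k^{\pm1}]^{S(k)}$, with product $F\star G=\frac{1}{k!\ell!}\mathrm{Sym}_{x_1,\dots,x_{k+\ell}}\big(F(x_1,\dots,x_k)G(x_{k+1},\dots,x_{k+\ell})\prod_{r\le k<r'}\zeta(x_r/x_{r'})\big)$, $\zeta(z/w)=\frac{(z-q_1^{-1}w)(z-q_2^{-1}w)(z-q_3^{-1}w)}{(z-w)^3}$; $S\subset\mathbb S$ is the subspace of $F$ with $F=0$ whenever $\{x_1/x_2,x_2/x_3,x_3/x_1\}=\{q_1,q_2,q_3\}$. $\mathbb S^{\mathrm{DFK}}=\bigoplus_k\mathbb S^{\mathrm{DFK}}_k$ with $\mathbb S^{\mathrm{DFK}}_k$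 the space of $f(x_1,\dots,x_k)/\prod_{1\le r\ne s\le k}(x_r-\mathfrak q^{-1}x_s)$, $f\in\mathbb C[x_1^{\pm1},\dots,x_k^{\pm1}]^{S(k)}$, with the analogous shuffle product using $\zeta^{\mathrm{DFK}}(x)=\frac{(1-\mathfrak tx)(1-\mathfrak q\mathfrak t^{-1}x)}{(1-x)(1-\mathfrak qx)}$ in place of $\zeta$; $S^{\mathrm{DFK}}\subset\mathbb S^{\mathrm{DFK}}$ is the subspace of $F$ whose numerator $f$ vanishes whenever $\{x_1/x_2,x_2/x_3,x_3/x_1\}=\{\mathfrak q,1/\mathfrak t,\mathfrak t/\mathfrak q\}$. *)

From HB Require Import structures.
From mathcomp Require Import all_boot all_order all_algebra all_fingroup.
From mathcomp Require Import Rstruct.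
From mathcomp.real_closed Require Import complex.
From mathcomp Require Import mpoly.

Set Implicit Arguments.
Unset Strict Implicit.
Unset Printing Implicit Defensive.

Import Order.TTheory GRing.Theory Num.Theory.
Local Open Scope ring_scope.

Notation CC := (complex Rdefinitions.R).

Notation Kn n := {fraction {mpoly CC[n]}}.

Definition Xv (n : nat) (i : 'I_n) : Kn n := tofrac ('X_i : {mpoly CC[n]}).
Definition cst (n : nat) (c : CC) : Kn n := tofrac (mpolyC n c).

Definition fracmap (n m : nat) (f : {mpoly CC[n]} -> Kn m) (F : Kn n) : Kn m :=
  f (\n_(generic_quotient.repr F)) / f (\d_(generic_quotient.repr F)).

Definition permF (n : nat) (s : 'S_n) : Kn n -> Kn n :=
  fracmap (fun p => tofrac (msym s p)).

Definition invvars (n : nat) : Kn n -> Kn n :=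
  fracmap (mmap (@cst n) (fun i => (Xv i)^-1)).

Definition embL (k l : nat) : Kn k -> Kn (k + l) :=
  fracmap (mmap (@cst (k + l)) (fun i => Xv (lshift l i))).
Definition embR (k l : nat) : Kn l -> Kn (k + l) :=
  fracmap (mmap (@cst (k + l)) (fun i => Xv (rshift k i))).

Definition Sym (n : nat) (H : Kn n) : Kn n := \sum_(s : 'S_n) permF s H.

(* shuffle product with kernel zf (zf z w stands for zeta(z/w)) *)
Definition shuffle (zf : forall n, Kn n -> Kn n -> Kn n)
    (k l : nat) (F : Kn k) (G : Kn l) : Kn (k + l) :=
  cst (k + l) ((k`! * l`!)%:R^-1) *
  Sym (embL l F * embR k G *
       \prod_(r < k + l | (r < k)%N) \prod_(r' < k + l | (k <= r')%N)
          zf (k + l) (Xv r) (Xv r')).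

Section Params.
Variables (q t : CC).

Definition q1 : CC := q.
Definition q2 : CC := t^-1.
Definition q3 : CC := t / q.

Definition zetaS (n : nat) (z w : Kn n) : Kn n :=
  (z - cst n q1^-1 * w) * (z - cst n q2^-1 * w) * (z - cst n q3^-1 * w)
  / (z - w) ^+ 3.

Definition zetaDFK (n : nat) (z w : Kn n) : Kn n :=
  let x := z / w in
  (1 - cst n t * x) * (1 - cst n (q / t) * x) / ((1 - x) * (1 - cst n q * x)).

Definition shuffleS := shuffle zetaS.
Definition shuffleDFK := shuffle zetaDFK.

Definition DeltaS (n : nat) : Kn n :=
  \prod_(r < n) \prod_(s < n | s != r) (Xv r - Xv s).
Definition DeltaDFK (n : nat) : Kn n :=
  \prod_(r < n) \prod_(s < n | s != r) (Xv r - cst n q^-1 * Xv s).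

(* (x_1 ... x_n)^N : a symmetric Laurent polynomial is p / (x_1...x_n)^N
   with p a symmetric polynomial *)
Definition monoN (n N : nat) : {mpoly CC[n]} := \prod_(i < n) 'X_i ^+ N.

Definition wheel_locus (n : nat) (x : 'I_n -> CC) : Prop :=
  exists a b c : 'I_n, [/\ val a = 0%N, val b = 1%N, val c = 2%N &
    perm_eq [:: x a / x b; x b / x c; x c / x a] [:: q1; q2; q3]].

(* F in S_n (resp. S^DFK_n): F = f / Delta with f a symmetric Laurent polynomial *)
Definition inSS (n : nat) (F : Kn n) : Prop :=
  exists (p : {mpoly CC[n]}) (N : nat),
    p \is symmetric /\ F = tofrac p / (tofrac (monoN n N) * DeltaS n).
Definition inSDFK (n : nat) (F : Kn n) : Prop :=
  exists (p : {mpoly CC[n]}) (N : nat),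
    p \is symmetric /\ F = tofrac p / (tofrac (monoN n N) * DeltaDFK n).

(* the subspaces S_n and S^DFK_n cut out by the wheel conditions: the numerator
   vanishes on the locus (points with nonzero coordinates) *)
Definition inWS (n : nat) (F : Kn n) : Prop :=
  exists (p : {mpoly CC[n]}) (N : nat),
    [/\ p \is symmetric, F = tofrac p / (tofrac (monoN n N) * DeltaS n) &
        forall x : 'I_n -> CC, (forall i, x i != 0) -> wheel_locus x -> p.@[x] = 0].
Definition inWDFK (n : nat) (F : Kn n) : Prop :=
  exists (p : {mpoly CC[n]}) (N : nat),
    [/\ p \is symmetric, F = tofrac p / (tofrac (monoN n N) * DeltaDFK n) &
        forall x : 'I_n -> CC, (forall i, x i != 0) -> wheel_locus x -> p.@[x] = 0].

Definition etaMap (n : nat) (P : Kn n) : Kn n :=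
  cst n (q ^- ((n * (n - 1)) %/ 2)) *
  (\prod_(r < n) \prod_(s < n | s != r)
      ((Xv r - Xv s) / (Xv r - cst n q^-1 * Xv s))) *
  invvars P.

End Params.

From Pilot Require Import Defs.
From HB Require Import structures.
From mathcomp Require Import all_boot all_order all_algebra all_fingroup.
From mathcomp Require Import Rstruct.
From mathcomp.real_closed Require Import complex.
From mathcomp Require Import mpoly ring zify generic_quotient.

Set Implicit Arguments.
Unset Strict Implicit.
Unset Printing Implicit Defensive.

Import GRing.Theory.
Local Open Scope ring_scope.

(* Write eta = c_n * (Delta / Delta^DFK) * iota, where iota : x_i |-> x_i^-1 is an
   involutive field automorphism of the rational functions that fixes the constants
   and commutes with the permutations of the variables and with the two embeddings
   used by the shuffle product.  Hence eta is linear, injective and commutes with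
   symmetrization.  In a shuffle product of degrees k and l, the factor q^-(k l) of
   c_(k+l) / (c_k c_l) and the cross factors of Delta / Delta^DFK combine, for x_r
   in the first block and x_s in the second, with zeta(x_r^-1 / x_s^-1) into
   zeta^DFK(x_r / x_s).
   Finally Delta / iota(Delta) = prod_(r <> s) (- x_r x_s) is a symmetric monomial,
   so eta(p / (x^N Delta)) = p' / (x^N' Delta^DFK) with p' symmetric and p'(x) a
   monomial times p(x^-1); since iota followed by the transposition of x_2 and x_3
   preserves the wheel locus, the wheel conditions are transferred too. *)

Lemma cst_is_zmod_morphism n : GRing.zmod_morphism (@cst n).
Proof. by move=> a b; rewrite /cst mpolyCB tofracB. Qed.

Lemma cst_is_monoid_morphism n : GRing.monoid_morphism (@cst n).
Proof. by split=> [|a b]; rewrite /cst ?mpolyC1 ?tofrac1 ?mpolyCM ?tofracM. Qed.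

HB.instance Definition _ n :=
  GRing.isZmodMorphism.Build CC (Kn n) (@cst n) (@cst_is_zmod_morphism n).
HB.instance Definition _ n :=
  GRing.isMonoidMorphism.Build CC (Kn n) (@cst n) (@cst_is_monoid_morphism n).

Lemma cst_neq0 n (c : CC) : c != 0 -> cst n c != 0.
Proof. by rewrite fmorph_eq0. Qed.

Lemma mpolyX_neq0 n (R : nzRingType) (i : 'I_n) : ('X_i : {mpoly R[n]}) != 0.
Proof.
apply/eqP => /(congr1 (fun p : {mpoly R[n]} => p@_U_(i))).
by rewrite mcoeffXU eqxx mcoeff0 => /eqP; rewrite oner_eq0.
Qed.

Lemma Xv_neq0 n (i : 'I_n) : Xv i != 0.
Proof. by rewrite tofrac_eq0 mpolyX_neq0. Qed.

Lemma cstXv_neq n (r s : 'I_n) (u v : CC) : r != s -> u != 0 ->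
  cst n u * Xv r != cst n v * Xv s.
Proof.
move=> rs un; rewrite /cst /Xv -!tofracM tofrac_eq.
apply/eqP => /(congr1 (fun p : {mpoly CC[n]} => p@_U_(r))).
by rewrite !mcoeffCM !mcoeffXU eqxx eq_sym (negbTE rs) mulr0 mulr1; apply/eqP.
Qed.

Lemma Xv_neq n (r s : 'I_n) : r != s -> Xv r != Xv s.
Proof. by move=> rs; have := cstXv_neq 1 rs (oner_neq0 _); rewrite rmorph1 !mul1r. Qed.

Lemma Xv_sub_neq0 n (r s : 'I_n) (c : CC) : r != s -> Xv r - cst n c * Xv s != 0.
Proof.
by move=> rs; rewrite subr_eq0 -[Xv r]mul1r -(rmorph1 (@cst n)) cstXv_neq ?oner_neq0.
Qed.

(** * Rational functions as fractions of polynomials *)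

Lemma fraction_repr (R : idomainType) (F : {fraction R}) :
  \d_(repr F) != 0 /\ F = tofrac \n_(repr F) / tofrac \d_(repr F).
Proof.
set x := repr F; have dx : \d_x != 0 by apply: denom_ratioP.
split=> //; apply: (@mulIf _ (tofrac \d_x)); first by rewrite tofrac_eq0.
rewrite divfK ?tofrac_eq0 // -[F]reprK -/x; unlock tofrac.
transitivity (\pi_{fraction R} (FracField.mulf x (Ratio \d_x 1)))%qT.
  by rewrite FracField.pi_mul.
apply/eqmodP; rewrite /= FracField.equivfE /FracField.mulf.
by rewrite !numden_Ratio ?mulf_neq0 ?oner_neq0 // !mulr1 mulrC.
Qed.

Lemma fractionP (R : idomainType) (F : {fraction R}) :
  exists a b, b != 0 /\ F = tofrac a / tofrac b.
Proof. by case: (fraction_repr F) => ? ?; exists \n_(repr F), \d_(repr F). Qed.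

Lemma subf_div (K : fieldType) (x1 y1 x2 y2 : K) : y1 != 0 -> y2 != 0 ->
  x1 / y1 - x2 / y2 = (x1 * y2 - x2 * y1) / (y1 * y2).
Proof. by move=> y10 y20; rewrite -mulNr addf_div // mulNr. Qed.

Section FracMap.
Variables (n m : nat) (f : {rmorphism {mpoly CC[n]} -> Kn m}).
Hypothesis f_eq0 : forall p, f p = 0 -> p = 0.

Lemma fracmap_neq0 p : p != 0 -> f p != 0.
Proof. by apply: contra => /eqP /f_eq0 ->. Qed.

Lemma fracmap_frac a b : b != 0 -> fracmap f (tofrac a / tofrac b) = f a / f b.
Proof.
move=> b0; rewrite /fracmap; case: (fraction_repr (tofrac a / tofrac b)).
move: (\n_ _) (\d_ _) => a' b' b'0 E.
have /(congr1 f) : a * b' = a' * b.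
  apply/eqP; rewrite -tofrac_eq !tofracM; apply/eqP.
  move/(congr1 (fun z => z * tofrac b * tofrac b')): E.
  by rewrite divfK ?tofrac_eq0 // mulrAC divfK ?tofrac_eq0.
rewrite !rmorphM => e; have fb := fracmap_neq0 b0; have fb' := fracmap_neq0 b'0.
by apply: (mulIf fb); apply: (mulIf fb'); rewrite (divfK fb) [LHS]mulrAC (divfK fb') e.
Qed.

Lemma fracmap_tofrac a : fracmap f (tofrac a) = f a.
Proof. by rewrite -[tofrac a]divr1 -tofrac1 fracmap_frac ?oner_neq0 // rmorph1 divr1. Qed.

Lemma fracmap_is_zmod_morphism : GRing.zmod_morphism (fracmap f).
Proof.
move=> F G; case: (fractionP F) => a [b [b0 ->]]; case: (fractionP G) => c [d [d0 ->]].
have tb : tofrac b != 0 by rewrite tofrac_eq0.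
have td : tofrac d != 0 by rewrite tofrac_eq0.
have fb := fracmap_neq0 b0; have fd := fracmap_neq0 d0.
have -> : tofrac a / tofrac b - tofrac c / tofrac d = tofrac (a * d - c * b) / tofrac (b * d).
  by rewrite tofracB !tofracM (subf_div _ _ tb td).
by rewrite !fracmap_frac ?mulf_neq0 // rmorphB !rmorphM (subf_div _ _ fb fd).
Qed.

Lemma fracmap_is_monoid_morphism : GRing.monoid_morphism (fracmap f).
Proof.
split=> [|F G]; first by rewrite -tofrac1 fracmap_tofrac rmorph1.
case: (fractionP F) => a [b [b0 ->]]; case: (fractionP G) => c [d [d0 ->]].
rewrite mulf_div -!tofracM !fracmap_frac ?mulf_neq0 // !rmorphM.
by rewrite mulf_div.
Qed.

End FracMap.

Lemma monoN0 n : monoN n 0 = 1.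
Proof. by rewrite /monoN big1 // => i _; rewrite expr0. Qed.

Lemma monoND n N1 N2 : monoN n N1 * monoN n N2 = monoN n (N1 + N2).
Proof. by rewrite /monoN -big_split; apply: eq_bigr => i _; rewrite exprD. Qed.

Lemma monoN_neq0 n N : monoN n N != 0.
Proof. by apply/prodf_neq0 => i _; rewrite expf_neq0 // mpolyX_neq0. Qed.

Lemma tofrac_monoN n N : tofrac (monoN n N) = \prod_(i < n) Xv i ^+ N.
Proof. by rewrite rmorph_prod; apply: eq_bigr => i _; rewrite rmorphXn. Qed.

Lemma tofrac_monoN_neq0 n N : tofrac (monoN n N) != 0 :> Kn n.
Proof. by rewrite tofrac_eq0 monoN_neq0. Qed.

(** * Laurent polynomials *)

Section LaurentEval.
Variables (n : nat) (K : fieldType) (h : {rmorphism {mpoly CC[n]} -> K}).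
Hypothesis hX_neq0 : forall i, h 'X_i != 0.

Lemma h_monoN_neq0 N : h (monoN n N) != 0.
Proof. by rewrite rmorph_prod; apply/prodf_neq0 => i _; rewrite rmorphXn expf_neq0. Qed.

(* The graph of the extension of [h] to Laurent polynomials [a / (x_1 ... x_n)^N]. *)
Definition laurent_eval (F : Kn n) (v : K) := exists a N,
  F = tofrac a / tofrac (monoN n N) /\ v = h a / h (monoN n N).

Lemma laurent_eval_tofrac p : laurent_eval (tofrac p) (h p).
Proof. by exists p, 0%N; rewrite monoN0 tofrac1 rmorph1 !divr1. Qed.

Lemma laurent_eval0 : laurent_eval 0 0.
Proof. by rewrite -(rmorph0 h) -tofrac0; apply: laurent_eval_tofrac. Qed.

Lemma laurent_eval1 : laurent_eval 1 1.
Proof. by rewrite -(rmorph1 h) -tofrac1; apply: laurent_eval_tofrac. Qed.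

Lemma laurent_evalD F G v w :
  laurent_eval F v -> laurent_eval G w -> laurent_eval (F + G) (v + w).
Proof.
case=> a [N [-> ->]] [c [N' [-> ->]]].
exists (a * monoN n N' + c * monoN n N), (N + N'); rewrite -monoND; split.
  by rewrite addf_div ?tofrac_monoN_neq0 // rmorphD !rmorphM.
by rewrite addf_div ?h_monoN_neq0 // rmorphD !rmorphM.
Qed.

Lemma laurent_evalM F G v w :
  laurent_eval F v -> laurent_eval G w -> laurent_eval (F * G) (v * w).
Proof.
case=> a [N [-> ->]] [c [N' [-> ->]]].
by exists (a * c), (N + N'); rewrite -monoND !rmorphM !mulf_div.
Qed.

Lemma laurent_evalXn F v k : laurent_eval F v -> laurent_eval (F ^+ k) (v ^+ k).
Proof.
move=> Fv; elim: k => [|k IH]; first by rewrite !expr0; apply: laurent_eval1.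
by rewrite !exprS; apply: laurent_evalM.
Qed.

Lemma laurent_eval_sum (I : Type) (r : seq I) (P : pred I) (F : I -> Kn n) (v : I -> K) :
  (forall i, P i -> laurent_eval (F i) (v i)) ->
  laurent_eval (\sum_(i <- r | P i) F i) (\sum_(i <- r | P i) v i).
Proof.
by move=> Fv; apply: (big_ind2 _ laurent_eval0 (fun F v G w => @laurent_evalD F G v w)).
Qed.

Lemma laurent_eval_prod (I : Type) (r : seq I) (P : pred I) (F : I -> Kn n) (v : I -> K) :
  (forall i, P i -> laurent_eval (F i) (v i)) ->
  laurent_eval (\prod_(i <- r | P i) F i) (\prod_(i <- r | P i) v i).
Proof.
by move=> Fv; apply: (big_ind2 _ laurent_eval1 (fun F v G w => @laurent_evalM F G v w)).
Qed.

Lemma laurent_evalV i : laurent_eval (Xv i)^-1 (h 'X_i)^-1.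
Proof.
set others := \prod_(j < n | j != i) ('X_j : {mpoly CC[n]}).
have others0 : others != 0 by apply/prodf_neq0 => j _; rewrite mpolyX_neq0.
have mono1 : monoN n 1 = others * 'X_i.
  by rewrite /monoN (bigD1 i) //= expr1 mulrC; congr (_ * _).
have t0 : tofrac others != 0 by rewrite tofrac_eq0.
have h0 : h others != 0 by rewrite rmorph_prod; apply/prodf_neq0.
by exists others, 1%N; rewrite mono1 !rmorphM !invfM (mulVKf t0) (mulVKf h0).
Qed.

Lemma laurent_eval_uniq F v a N :
  laurent_eval F v -> F = tofrac a / tofrac (monoN n N) -> v = h a / h (monoN n N).
Proof.
case=> b [N' [-> ->]] E; have t1 := tofrac_monoN_neq0 n N.
have t2 := tofrac_monoN_neq0 n N'.
have e : b * monoN n N = a * monoN n N'.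
  apply/eqP; rewrite -tofrac_eq !tofracM; apply/eqP.
  move/(congr1 (fun z => z * tofrac (monoN n N) * tofrac (monoN n N'))): E.
  by rewrite (divfK t1) [X in X = _ -> _]mulrAC (divfK t2).
have h1 := h_monoN_neq0 N; have h2 := h_monoN_neq0 N'.
apply: (mulIf h1); apply: (mulIf h2).
by rewrite [LHS]mulrAC (divfK h2) (divfK h1) -!rmorphM e.
Qed.

End LaurentEval.

(** * Substitutions of the variables *)

Lemma mpoly_rmorph_expand n (S : comNzRingType) (phi : {rmorphism {mpoly CC[n]} -> S})
    (p : {mpoly CC[n]}) :
  phi p = \sum_(m <- msupp p) phi (p@_m)%:MP * \prod_(i < n) phi 'X_i ^+ m i.
Proof.
rewrite [in LHS](mpolyE p) rmorph_sum; apply: eq_bigr => m _.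
rewrite -mul_mpolyC rmorphM mpolyXE_id rmorph_prod; congr (_ * _).
by apply: eq_bigr => i _; rewrite rmorphXn.
Qed.

Lemma mpoly_rmorph_ext n (S : comNzRingType)
    (phi psi : {rmorphism {mpoly CC[n]} -> S}) :
  (forall c, phi c%:MP = psi c%:MP) -> (forall i, phi 'X_i = psi 'X_i) -> phi =1 psi.
Proof.
move=> eqC eqX p; rewrite !mpoly_rmorph_expand; apply: eq_bigr => m _.
by rewrite eqC; congr (_ * _); apply: eq_bigr => i _; rewrite eqX.
Qed.

Lemma Kn_rmorph_ext n m (phi psi : {rmorphism Kn n -> Kn m}) :
  (forall c, phi (cst n c) = psi (cst n c)) -> (forall i, phi (Xv i) = psi (Xv i)) ->
  phi =1 psi.
Proof.
move=> eqC eqX F; case: (fractionP F) => a [b [_ ->]].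
have eq_tofrac p : phi (tofrac p) = psi (tofrac p).
  exact: (@mpoly_rmorph_ext _ _ (phi \o @tofrac _) (psi \o @tofrac _)).
by rewrite !fmorph_div !eq_tofrac.
Qed.

Lemma mmapXU n (S : comNzRingType) (f : {rmorphism CC -> S}) (g : 'I_n -> S) i :
  mmap f g 'X_i = g i.
Proof. by rewrite mmapX mmap1U. Qed.

Lemma mmap_cst_tofrac n m (g : 'I_n -> {mpoly CC[m]}) p :
  mmap (@cst m) (fun i => tofrac (g i)) p = tofrac (mmap (@mpolyC m CC) g p).
Proof.
apply: (@mpoly_rmorph_ext _ _ _ (@tofrac _ \o mmap (@mpolyC m CC) g)) => [c|i] /=.
  by rewrite !mmapC.
by rewrite !mmapXU.
Qed.

Lemma mmap_mpolyCK n m (g : 'I_n -> {mpoly CC[m]}) (r : 'I_m -> {mpoly CC[n]}) :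
  (forall i, mmap (@mpolyC n CC) r (g i) = 'X_i) ->
  cancel (mmap (@mpolyC m CC) g) (mmap (@mpolyC n CC) r).
Proof.
move=> rg; apply: (@mpoly_rmorph_ext _ _ (_ \o _) idfun) => [c|i] /=.
  by rewrite !mmapC.
by rewrite mmapXU rg.
Qed.

Lemma tofrac_mmap n p : tofrac p = mmap (@cst n) (@Xv n) p.
Proof. exact: (mpoly_rmorph_expand (@tofrac _)). Qed.

Notation invX n := (mmap (@cst n) (fun i : 'I_n => (Xv i)^-1)).

Lemma laurent_eval_invX n (K : fieldType) (h : {rmorphism {mpoly CC[n]} -> K})
    (hX_neq0 : forall i, h 'X_i != 0) p :
  laurent_eval h (invX n p) (mmap (fun c => h c%:MP) (fun i => (h 'X_i)^-1) p).
Proof.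
apply: (laurent_eval_sum hX_neq0) => m _.
apply: laurent_evalM; first exact: laurent_eval_tofrac.
by apply: laurent_eval_prod => i _; apply/laurent_evalXn/laurent_evalV.
Qed.

Lemma invX_eq0 n p : invX n p = 0 -> p = 0.
Proof.
have hX i : invX n 'X_i != 0 by rewrite mmapXU invr_eq0 Xv_neq0.
move=> p0; have p_frac : invX n p = tofrac 0 / tofrac (monoN n 0).
  by rewrite p0 tofrac0 mul0r.
have := laurent_eval_uniq hX (laurent_eval_invX hX p) p_frac.
rewrite rmorph0 mul0r.
have -> : mmap (fun c => invX n c%:MP) (fun i => (invX n 'X_i)^-1) p = tofrac p.
  rewrite tofrac_mmap; apply: eq_bigr => m _; rewrite mmapC; congr (_ * _).
  by apply: mmap1_eq => i; rewrite mmapXU invrK.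
by move/eqP; rewrite tofrac_eq0 => /eqP.
Qed.

Lemma invvars_is_zmod_morphism n : GRing.zmod_morphism (@invvars n).
Proof. exact: fracmap_is_zmod_morphism (@invX_eq0 n). Qed.
Lemma invvars_is_monoid_morphism n : GRing.monoid_morphism (@invvars n).
Proof. exact: fracmap_is_monoid_morphism (@invX_eq0 n). Qed.
HB.instance Definition _ n := GRing.isZmodMorphism.Build (Kn n) (Kn n) (@invvars n)
  (@invvars_is_zmod_morphism n).
HB.instance Definition _ n := GRing.isMonoidMorphism.Build (Kn n) (Kn n) (@invvars n)
  (@invvars_is_monoid_morphism n).

Lemma invvars_tofrac n p : invvars (tofrac p) = invX n p.
Proof. exact: fracmap_tofrac (@invX_eq0 n) p. Qed.

Lemma invvars_Xv n (i : 'I_n) : invvars (Xv i) = (Xv i)^-1.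
Proof. by rewrite invvars_tofrac mmapXU. Qed.

Lemma invvars_cst n c : invvars (cst n c) = cst n c.
Proof. by rewrite invvars_tofrac mmapC. Qed.

(* The generic pattern of [rmorphM] also matches [invvars F] whenever [F] unfolds to
   a product, e.g. [F = invvars G], which is a quotient by definition of [fracmap]. *)
Lemma invvarsM n (F G : Kn n) : invvars (F * G) = invvars F * invvars G.
Proof. exact: rmorphM. Qed.

Lemma invvarsV n (F : Kn n) : invvars F^-1 = (invvars F)^-1.
Proof. exact: fmorphV. Qed.

Lemma invvarsK n : involutive (@invvars n).
Proof.
move=> F; change ((@invvars n \o @invvars n) F = idfun F).
apply: Kn_rmorph_ext => [c|i].
  by change (invvars (invvars (cst n c)) = cst n c); rewrite !invvars_cst.
change (invvars (invvars (Xv i)) = Xv i).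
by rewrite invvars_Xv invvarsV invvars_Xv invrK.
Qed.

Lemma msym_tofrac_eq0 n (s : 'S_n) (p : {mpoly CC[n]}) :
  tofrac (msym s p) = 0 -> p = 0.
Proof.
move/eqP; rewrite tofrac_eq0 => /eqP sp0.
by rewrite -[p]msym1m -(mulgV s) msymMm sp0 msym0.
Qed.

Lemma permF_is_zmod_morphism n (s : 'S_n) : GRing.zmod_morphism (permF s).
Proof. exact: (fracmap_is_zmod_morphism (f := @tofrac _ \o msym s) (@msym_tofrac_eq0 n s)). Qed.
Lemma permF_is_monoid_morphism n (s : 'S_n) : GRing.monoid_morphism (permF s).
Proof.
exact: (fracmap_is_monoid_morphism (f := @tofrac _ \o msym s) (@msym_tofrac_eq0 n s)).
Qed.
HB.instance Definition _ n s := GRing.isZmodMorphism.Build (Kn n) (Kn n) (@permF n s)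
  (@permF_is_zmod_morphism n s).
HB.instance Definition _ n s := GRing.isMonoidMorphism.Build (Kn n) (Kn n) (@permF n s)
  (@permF_is_monoid_morphism n s).

Lemma permF_tofrac n (s : 'S_n) (p : {mpoly CC[n]}) :
  permF s (tofrac p) = tofrac (msym s p).
Proof. exact: (fracmap_tofrac (f := @tofrac _ \o msym s) (@msym_tofrac_eq0 n s) p). Qed.

Lemma permF_Xv n (s : 'S_n) i : permF s (Xv i) = Xv (s i).
Proof. by rewrite permF_tofrac /msym mmapXU. Qed.

Lemma permF_cst n (s : 'S_n) c : permF s (cst n c) = cst n c.
Proof. by rewrite permF_tofrac /msym mmapC. Qed.

Definition lshift_inv k l (j : 'I_(k + l)) : {mpoly CC[k]} :=
  if split j is inl i then 'X_i else 0.
Definition rshift_inv k l (j : 'I_(k + l)) : {mpoly CC[l]} :=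
  if split j is inr i then 'X_i else 0.

Lemma embL_poly_eq0 k l (p : {mpoly CC[k]}) :
  mmap (@cst (k + l)) (fun i => Xv (lshift l i)) p = 0 -> p = 0.
Proof.
rewrite (mmap_cst_tofrac (fun i => 'X_(lshift l i))) => /eqP.
rewrite tofrac_eq0 => /eqP p0.
rewrite -[p](@mmap_mpolyCK _ _ (fun i => 'X_(lshift l i)) (@lshift_inv k l)) ?p0 ?rmorph0 //
  => i.
by rewrite mmapXU /lshift_inv (unsplitK (inl i)).
Qed.

Lemma embR_poly_eq0 k l (p : {mpoly CC[l]}) :
  mmap (@cst (k + l)) (fun i => Xv (rshift k i)) p = 0 -> p = 0.
Proof.
rewrite (mmap_cst_tofrac (fun i => 'X_(rshift k i))) => /eqP.
rewrite tofrac_eq0 => /eqP p0.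
rewrite -[p](@mmap_mpolyCK _ _ (fun i => 'X_(rshift k i)) (@rshift_inv k l)) ?p0 ?rmorph0 //
  => i.
by rewrite mmapXU /rshift_inv (unsplitK (inr i)).
Qed.

Lemma embL_is_zmod_morphism k l : GRing.zmod_morphism (@embL k l).
Proof. exact: fracmap_is_zmod_morphism (@embL_poly_eq0 k l). Qed.
Lemma embL_is_monoid_morphism k l : GRing.monoid_morphism (@embL k l).
Proof. exact: fracmap_is_monoid_morphism (@embL_poly_eq0 k l). Qed.
HB.instance Definition _ k l := GRing.isZmodMorphism.Build (Kn k) (Kn (k + l)) (@embL k l)
  (@embL_is_zmod_morphism k l).
HB.instance Definition _ k l := GRing.isMonoidMorphism.Build (Kn k) (Kn (k + l)) (@embL k l)
  (@embL_is_monoid_morphism k l).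

Lemma embR_is_zmod_morphism k l : GRing.zmod_morphism (@embR k l).
Proof. exact: fracmap_is_zmod_morphism (@embR_poly_eq0 k l). Qed.
Lemma embR_is_monoid_morphism k l : GRing.monoid_morphism (@embR k l).
Proof. exact: fracmap_is_monoid_morphism (@embR_poly_eq0 k l). Qed.
HB.instance Definition _ k l := GRing.isZmodMorphism.Build (Kn l) (Kn (k + l)) (@embR k l)
  (@embR_is_zmod_morphism k l).
HB.instance Definition _ k l := GRing.isMonoidMorphism.Build (Kn l) (Kn (k + l)) (@embR k l)
  (@embR_is_monoid_morphism k l).

Lemma embL_tofrac k l (p : {mpoly CC[k]}) :
  embL l (tofrac p) = mmap (@cst (k + l)) (fun i => Xv (lshift l i)) p.
Proof. exact: fracmap_tofrac (@embL_poly_eq0 k l) p. Qed.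
Lemma embR_tofrac k l (p : {mpoly CC[l]}) :
  embR k (tofrac p) = mmap (@cst (k + l)) (fun i => Xv (rshift k i)) p.
Proof. exact: fracmap_tofrac (@embR_poly_eq0 k l) p. Qed.

Lemma embL_Xv k l i : @embL k l (Xv i) = Xv (lshift l i).
Proof. by rewrite embL_tofrac mmapXU. Qed.
Lemma embL_cst k l c : @embL k l (cst k c) = cst (k + l) c.
Proof. by rewrite embL_tofrac mmapC. Qed.
Lemma embR_Xv k l i : @embR k l (Xv i) = Xv (rshift k i).
Proof. by rewrite embR_tofrac mmapXU. Qed.
Lemma embR_cst k l c : @embR k l (cst l c) = cst (k + l) c.
Proof. by rewrite embR_tofrac mmapC. Qed.

Lemma invvars_permF n (s : 'S_n) (F : Kn n) : invvars (permF s F) = permF s (invvars F).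
Proof.
change ((@invvars n \o permF s) F = (permF s \o @invvars n) F).
apply: Kn_rmorph_ext => [c|i].
  by change (invvars (permF s (cst n c)) = permF s (invvars (cst n c)));
    rewrite permF_cst !invvars_cst permF_cst.
change (invvars (permF s (Xv i)) = permF s (invvars (Xv i))).
by rewrite permF_Xv !invvars_Xv fmorphV /= permF_Xv.
Qed.

Lemma invvars_embL k l (F : Kn k) : invvars (embL l F) = embL l (invvars F).
Proof.
change ((@invvars (k + l) \o @embL k l) F = (@embL k l \o @invvars k) F).
apply: Kn_rmorph_ext => [c|i].
  by change (invvars (embL l (cst k c)) = embL l (invvars (cst k c)));
    rewrite embL_cst !invvars_cst embL_cst.
change (invvars (embL l (Xv i)) = embL l (invvars (Xv i))).
by rewrite embL_Xv !invvars_Xv fmorphV /= embL_Xv.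
Qed.

Lemma invvars_embR k l (F : Kn l) : invvars (embR k F) = embR k (invvars F).
Proof.
change ((@invvars (k + l) \o @embR k l) F = (@embR k l \o @invvars l) F).
apply: Kn_rmorph_ext => [c|i].
  by change (invvars (embR k (cst l c)) = embR k (invvars (cst l c)));
    rewrite embR_cst !invvars_cst embR_cst.
change (invvars (embR k (Xv i)) = embR k (invvars (Xv i))).
by rewrite embR_Xv !invvars_Xv fmorphV /= embR_Xv.
Qed.

(** * The map eta and the shuffle products *)

Section OffDiagonalProducts.
Variable R : comPzRingType.

Lemma prod_offdiag_perm n (s : 'S_n) (g : 'I_n -> 'I_n -> R) :
  \prod_(r < n) \prod_(r' < n | r' != r) g (s r) (s r') =
  \prod_(r < n) \prod_(r' < n | r' != r) g r r'.
Proof.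
rewrite [RHS](reindex_inj (@perm_inj _ s)); apply: eq_bigr => r _.
rewrite [RHS](reindex_inj (@perm_inj _ s)); apply: eq_bigl => r'.
by rewrite (inj_eq (@perm_inj _ s)).
Qed.

Lemma prod_offdiag_split k l (g : 'I_(k + l) -> 'I_(k + l) -> R) :
  \prod_(r < k + l) \prod_(r' < k + l | r' != r) g r r' =
  (\prod_(r < k) \prod_(r' < k | r' != r) g (lshift l r) (lshift l r')) *
  (\prod_(r < l) \prod_(r' < l | r' != r) g (rshift k r) (rshift k r')) *
  \prod_(r < k) \prod_(s < l) (g (lshift l r) (rshift k s) * g (rshift k s) (lshift l r)).
Proof.
have splitL r : \prod_(r' < k + l | r' != lshift l r) g (lshift l r) r' =
    \prod_(r' < k | r' != r) g (lshift l r) (lshift l r') *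
    \prod_(s < l) g (lshift l r) (rshift k s).
  by rewrite big_split_ord; congr (_ * _); apply: eq_bigl => r' /=;
    rewrite ?eq_lshift ?eq_rlshift.
have splitR s : \prod_(r' < k + l | r' != rshift k s) g (rshift k s) r' =
    \prod_(r < k) g (rshift k s) (lshift l r) *
    \prod_(r' < l | r' != s) g (rshift k s) (rshift k r').
  by rewrite big_split_ord; congr (_ * _); apply: eq_bigl => r' /=;
    rewrite ?eq_lrshift ?eq_rshift.
rewrite big_split_ord (eq_bigr _ (fun r _ => splitL r)) (eq_bigr _ (fun s _ => splitR s)).
rewrite !big_split /= [X in _ = _ * X](eq_bigr _ (fun r _ => big_split _ _ _ _ _)).
rewrite big_split /= [X in _ = _ * (_ * X)]exchange_big /=.
by ring.
Qed.

Lemma prod_cross_split k l (g : 'I_(k + l) -> 'I_(k + l) -> R) :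
  \prod_(r < k + l | (r < k)%N) \prod_(r' < k + l | (k <= r')%N) g r r' =
  \prod_(r < k) \prod_(s < l) g (lshift l r) (rshift k s).
Proof.
rewrite big_split_ord /= [X in _ * X]big_pred0 => [|i /=]; last by rewrite ltnNge leq_addr.
rewrite mulr1; apply: eq_big => [r|r _] /=; first by rewrite ltn_ord.
rewrite big_split_ord /= big_pred0 ?mul1r => [|i /=]; last by rewrite leqNgt ltn_ord.
by apply: eq_bigl => s /=; rewrite leq_addr.
Qed.

End OffDiagonalProducts.

Lemma bin2D k l : ('C(k + l, 2) = 'C(k, 2) + 'C(l, 2) + k * l)%N.
Proof.
elim: l => [|l IHl]; first by rewrite addn0 bin0n muln0 !addn0.
by rewrite addnS !binS bin1 IHl bin1 mulnS; lia.
Qed.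

Lemma half_pred_mulD k l : (((k + l) * (k + l - 1)) %/ 2 =
  (k * (k - 1)) %/ 2 + (l * (l - 1)) %/ 2 + k * l)%N.
Proof. by rewrite !divn2 !subn1 -!bin2 bin2D. Qed.

Lemma zeta_pair_identity (K : fieldType) (Q T a b : K) :
  Q != 0 -> T != 0 -> a != 0 -> b != 0 -> a != b -> Q * a != b -> Q * b != a ->
  Q^-1 * ((a - b) / (a - Q^-1 * b) * ((b - a) / (b - Q^-1 * a))) *
  ((a^-1 - Q^-1 * b^-1) * (a^-1 - T^-1^-1 * b^-1) * (a^-1 - (T / Q)^-1 * b^-1)
    / (a^-1 - b^-1) ^+ 3)
  = (1 - T * (a / b)) * (1 - Q / T * (a / b)) / ((1 - a / b) * (1 - Q * (a / b))).
Proof.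
move=> Q0 T0 a0 b0 ab Qab Qba.
have ba : b - a != 0 by rewrite subr_eq0 eq_sym.
have bQa : b * Q - a != 0 by rewrite subr_eq0 mulrC.
have aQb : a * Q - b != 0 by rewrite subr_eq0 mulrC.
have bqa : b - Q * a != 0 by rewrite subr_eq0 eq_sym.
by field; rewrite ba bQa aQb bqa Q0 T0 a0 b0 oner_neq0.
Qed.

Section Eta.
Variables q t : CC.
Hypotheses (q_neq0 : q != 0) (t_neq0 : t != 0).

Definition deltaq n (r s : 'I_n) : Kn n := (Xv r - Xv s) / (Xv r - cst n q^-1 * Xv s).
Definition Deltaq n : Kn n := \prod_(r < n) \prod_(s < n | s != r) deltaq r s.
Definition eta_const n : Kn n := cst n (q ^- ((n * (n - 1)) %/ 2)).

Lemma etaMapE n (F : Kn n) : etaMap q F = eta_const n * Deltaq n * invvars F.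
Proof. by []. Qed.

Lemma eta_const_neq0 n : eta_const n != 0.
Proof. by rewrite cst_neq0 // invr_eq0 expf_neq0. Qed.

Lemma Deltaq_neq0 n : Deltaq n != 0.
Proof.
apply/prodf_neq0 => r _; apply/prodf_neq0 => s sr; rewrite eq_sym in sr.
by rewrite /deltaq mulf_neq0 ?invr_eq0 ?Xv_sub_neq0 // subr_eq0 Xv_neq.
Qed.

Lemma DeltaqE n : Deltaq n = DeltaS n / DeltaDFK q n.
Proof. by rewrite /Deltaq -prodf_div; apply: eq_bigr => r _; rewrite -prodf_div. Qed.

Lemma permF_Deltaq n (s : 'S_n) : permF s (Deltaq n) = Deltaq n.
Proof.
rewrite rmorph_prod -[RHS](prod_offdiag_perm s); apply: eq_bigr => r _.
rewrite rmorph_prod; apply: eq_bigr => r' _.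
by rewrite rmorphM fmorphV !rmorphB rmorphM /= !permF_Xv permF_cst.
Qed.

Lemma Deltaq_split k l : Deltaq (k + l) = embL l (Deltaq k) * embR k (Deltaq l) *
  \prod_(r < k) \prod_(s < l)
    (deltaq (lshift l r) (rshift k s) * deltaq (rshift k s) (lshift l r)).
Proof.
rewrite /Deltaq prod_offdiag_split !rmorph_prod; congr (_ * _ * _).
  apply: eq_bigr => r _; rewrite rmorph_prod; apply: eq_bigr => r' _.
  by rewrite rmorphM fmorphV !rmorphB rmorphM /= !embL_Xv embL_cst.
apply: eq_bigr => r _; rewrite rmorph_prod; apply: eq_bigr => r' _.
by rewrite rmorphM fmorphV !rmorphB rmorphM /= !embR_Xv embR_cst.
Qed.

Lemma eta_const_split k l : eta_const (k + l) =
  embL l (eta_const k) * embR k (eta_const l) *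
  \prod_(r < k) \prod_(s < l) cst (k + l) q^-1.
Proof.
rewrite /eta_const embL_cst embR_cst half_pred_mulD !exprD !invfM !rmorphM.
rewrite -[q ^- (k * l)]exprVn rmorphXn; congr (_ * _).
rewrite (eq_bigr (fun=> cst (k + l) q^-1 ^+ l)) => [|r _]; last by rewrite prodr_const card_ord.
by rewrite prodr_const card_ord -exprM mulnC.
Qed.

Lemma invvars_zetaS n (z w : Kn n) :
  invvars (zetaS q t z w) = zetaS q t (invvars z) (invvars w).
Proof. by rewrite /zetaS !(rmorphM, rmorphB, rmorphXn, fmorphV) /= !invvars_cst. Qed.

Lemma zetaS_inv_pair n (i j : 'I_n) : i != j ->
  cst n q^-1 * (deltaq i j * deltaq j i) * zetaS q t (Xv i)^-1 (Xv j)^-1 =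
  zetaDFK q t (Xv i) (Xv j).
Proof.
move=> ij; rewrite /deltaq /zetaS /zetaDFK /q1 /q2 /q3 !fmorphV !fmorph_div.
apply: zeta_pair_identity; rewrite ?cst_neq0 ?Xv_neq0 ?Xv_neq //.
  by rewrite -[Xv j]mul1r -(rmorph1 (@cst n)) cstXv_neq.
by rewrite -[Xv i]mul1r -(rmorph1 (@cst n)) cstXv_neq // eq_sym.
Qed.

Lemma etaMap_Sym n (H : Kn n) : etaMap q (Defs.Sym H) = Defs.Sym (etaMap q H).
Proof.
rewrite etaMapE rmorph_sum mulr_sumr; apply: eq_bigr => s _ /=.
rewrite etaMapE invvars_permF [in RHS]rmorphM [in RHS]rmorphM /= permF_Deltaq.
by rewrite /eta_const permF_cst.
Qed.

Lemma etaMap_cross_kernel k l :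
  eta_const (k + l) * Deltaq (k + l) *
    invvars (\prod_(r < k + l | (r < k)%N) \prod_(r' < k + l | (k <= r')%N)
               zetaS q t (Xv r) (Xv r'))
  = embL l (eta_const k * Deltaq k) * embR k (eta_const l * Deltaq l) *
    \prod_(r < k + l | (r < k)%N) \prod_(r' < k + l | (k <= r')%N)
      zetaDFK q t (Xv r) (Xv r').
Proof.
have cross : (\prod_(r < k) \prod_(s < l) cst (k + l) q^-1) *
    (\prod_(r < k) \prod_(s < l)
       (deltaq (lshift l r) (rshift k s) * deltaq (rshift k s) (lshift l r))) *
    (\prod_(r < k) \prod_(s < l) zetaS q t (Xv (lshift l r))^-1 (Xv (rshift k s))^-1)
  = \prod_(r < k) \prod_(s < l) zetaDFK q t (Xv (lshift l r)) (Xv (rshift k s)).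
  rewrite -!big_split; apply: eq_bigr => r _; rewrite -!big_split; apply: eq_bigr => s _.
  by apply: zetaS_inv_pair; rewrite eq_lrshift.
have inv_cross :
    invvars (\prod_(r < k) \prod_(s < l) zetaS q t (Xv (lshift l r)) (Xv (rshift k s))) =
    \prod_(r < k) \prod_(s < l) zetaS q t (Xv (lshift l r))^-1 (Xv (rshift k s))^-1.
  rewrite rmorph_prod; apply: eq_bigr => r _ /=.
  rewrite rmorph_prod; apply: eq_bigr => s _ /=.
  by rewrite invvars_zetaS !invvars_Xv.
rewrite !prod_cross_split inv_cross eta_const_split Deltaq_split -cross !rmorphM.
ring.
Qed.

Lemma etaMap_shuffle k l (F : Kn k) (G : Kn l) :
  etaMap q (shuffleS q t F G) = shuffleDFK q t (etaMap q F) (etaMap q G).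
Proof.
rewrite /shuffleS /shuffleDFK /shuffle etaMapE rmorphM /= invvars_cst.
rewrite mulrCA -etaMapE etaMap_Sym; congr (_ * Defs.Sym _).
rewrite etaMapE invvarsM invvarsM invvars_embL invvars_embR !etaMapE.
transitivity (eta_const (k + l) * Deltaq (k + l) * invvars (\prod_(r < k + l | (r < k)%N)
  \prod_(r' < k + l | (k <= r')%N) zetaS q t (Xv r) (Xv r')) *
  (embL l (invvars F) * embR k (invvars G))); first by ring.
rewrite etaMap_cross_kernel [in RHS]rmorphM [in RHS](rmorphM (@embR k l)).
ring.
Qed.

End Eta.

(** * Symmetric numerators and the wheel conditions *)

Lemma DeltaS_neq0 n : DeltaS n != 0.
Proof.
apply/prodf_neq0 => r _; apply/prodf_neq0 => s sr.
by rewrite subr_eq0 Xv_neq // eq_sym.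
Qed.

Lemma invvars_DeltaS_neq0 n : invvars (DeltaS n) != 0.
Proof. by rewrite fmorph_eq0 DeltaS_neq0. Qed.

Lemma subr_div_subVV (K : fieldType) (a b : K) : a != 0 -> b != 0 -> a != b ->
  (a - b) / (a^-1 - b^-1) = - (a * b).
Proof.
move=> a0 b0 ab; have ba : b + -1 * a != 0 by rewrite mulN1r subr_eq0 eq_sym.
by field; rewrite ba a0 b0.
Qed.

Lemma DeltaS_div_invvars n : DeltaS n / invvars (DeltaS n) =
  \prod_(r < n) \prod_(s < n | s != r) (cst n (-1) * (Xv r * Xv s)).
Proof.
rewrite rmorph_prod -prodf_div; apply: eq_bigr => r _ /=.
rewrite rmorph_prod -prodf_div; apply: eq_bigr => s sr /=.
rewrite rmorphB /= !invvars_Xv subr_div_subVV ?Xv_neq0 ?Xv_neq 1?eq_sym //.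
by rewrite rmorphN1 mulN1r.
Qed.

Lemma permF_monoN n (s : 'S_n) N : permF s (tofrac (monoN n N)) = tofrac (monoN n N).
Proof.
rewrite tofrac_monoN rmorph_prod [RHS](reindex_inj (@perm_inj _ s)).
by apply: eq_bigr => i _ /=; rewrite rmorphXn /= permF_Xv.
Qed.

Lemma invvars_monoN n N : invvars (tofrac (monoN n N)) = (tofrac (monoN n N))^-1.
Proof.
rewrite tofrac_monoN rmorph_prod -prodfV; apply: eq_bigr => i _ /=.
by rewrite rmorphXn /= invvars_Xv exprVn.
Qed.

Lemma permF_DeltaS_div_invvars n (s : 'S_n) :
  permF s (DeltaS n / invvars (DeltaS n)) = DeltaS n / invvars (DeltaS n).
Proof.
rewrite DeltaS_div_invvars rmorph_prod.
rewrite -[RHS](prod_offdiag_perm s (fun r r' => cst n (-1) * (Xv r * Xv r'))).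
apply: eq_bigr => r _ /=; rewrite rmorph_prod; apply: eq_bigr => r' _ /=.
by rewrite !rmorphM /= permF_cst !permF_Xv.
Qed.

Definition eta_num n (p : {mpoly CC[n]}) N : Kn n :=
  invvars (tofrac p) * tofrac (monoN n N) * (DeltaS n / invvars (DeltaS n)).

Lemma etaMap_frac q n (p : {mpoly CC[n]}) N :
  etaMap q (tofrac p / (tofrac (monoN n N) * DeltaS n)) =
  eta_const q n * eta_num p N / DeltaDFK q n.
Proof.
rewrite etaMapE DeltaqE invvarsM invvarsV invvarsM invvars_monoN /eta_num invfM invrK.
ring.
Qed.

Lemma invvars_eta_num n (p : {mpoly CC[n]}) N :
  invvars (eta_num p N) = tofrac p / tofrac (monoN n N) * (invvars (DeltaS n) / DeltaS n).
Proof.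
rewrite /eta_num invvarsM invvarsM invvarsK invvars_monoN.
by rewrite (invvarsM (DeltaS n)) invvarsV invvarsK.
Qed.

Lemma permF_eta_num n (s : 'S_n) (p : {mpoly CC[n]}) N :
  p \is symmetric -> permF s (eta_num p N) = eta_num p N.
Proof.
move=> /issymP sym_p.
rewrite /eta_num rmorphM rmorphM /= permF_DeltaS_div_invvars permF_monoN.
by rewrite -invvars_permF permF_tofrac sym_p.
Qed.

Lemma laurent_eval_eta_num n (K : fieldType) (h : {rmorphism {mpoly CC[n]} -> K})
    (hX_neq0 : forall i, h 'X_i != 0) (d : CC) (p : {mpoly CC[n]}) N :
  laurent_eval h (cst n d * eta_num p N)
    (h d%:MP * (mmap (fun c => h c%:MP) (fun i => (h 'X_i)^-1) p * h (monoN n N) *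
      \prod_(r < n) \prod_(s < n | s != r) (h (-1)%:MP * (h 'X_r * h 'X_s)))).
Proof.
rewrite /eta_num DeltaS_div_invvars invvars_tofrac.
apply: laurent_evalM; first exact: laurent_eval_tofrac.
apply: laurent_evalM.
  by apply: laurent_evalM; [exact: laurent_eval_invX | exact: laurent_eval_tofrac].
apply: laurent_eval_prod => r _; apply: laurent_eval_prod => s _.
by apply: laurent_evalM; last apply: laurent_evalM; exact: laurent_eval_tofrac.
Qed.

Definition wheel_vanishing q t n (p : {mpoly CC[n]}) : Prop :=
  forall x : 'I_n -> CC, (forall i, x i != 0) -> wheel_locus q t x -> p.@[x] = 0.

Lemma meval_msym n (v : 'I_n -> CC) (s : 'S_n) (p : {mpoly CC[n]}) :
  (msym s p).@[v] = p.@[fun i => v (s i)].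
Proof.
apply: (@mpoly_rmorph_ext _ _ (meval v \o msym s) (meval (fun i => v (s i))))
  => [c|i] /=.
  by rewrite /msym mmapC !mevalC.
by rewrite /msym mmapXU !mevalXU.
Qed.

(* The inversion [x |-> x^-1] followed by swapping [x_2] and [x_3] maps the wheel
   locus to itself: it sends the ratios [x_1/x_2, x_2/x_3, x_3/x_1] to
   [x_3/x_1, x_2/x_3, x_1/x_2]. *)
Lemma wheel_vanishing_inv q t n (p : {mpoly CC[n]}) (x : 'I_n -> CC) :
  p \is symmetric -> wheel_vanishing q t p ->
  (forall i, x i != 0) -> wheel_locus q t x -> p.@[fun i => (x i)^-1] = 0.
Proof.
move=> /issymP sym_p p_wheel x0 [a [b [c [va vb vc ratios]]]].
have ab : a != b by apply/eqP => eab; move: va vb; rewrite eab => ->.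
have ac : a != c by apply/eqP => eac; move: va vc; rewrite eac => ->.
set y := fun i => (x (tperm b c i))^-1.
have -> : p.@[fun i => (x i)^-1] = p.@[fun i => y (tperm b c i)].
  by apply: meval_eq => i; rewrite /y tpermK.
rewrite -meval_msym sym_p; apply: p_wheel => [i|]; first by rewrite invr_eq0.
exists a, b, c; split => //; apply: perm_trans ratios.
rewrite /y tpermL tpermR tpermD 1?eq_sym // !invrK ![_^-1 * _]mulrC.
by rewrite -perm_rev.
Qed.

Lemma eta_num_symmetric_numerator q t n (p : {mpoly CC[n]}) N (d : CC) :
  p \is symmetric -> exists p' N', [/\ p' \is symmetric,
    tofrac p' / tofrac (monoN n N') = cst n d * eta_num p N &
    wheel_vanishing q t p -> wheel_vanishing q t p'].
Proof.
move=> sym_p.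
have one_neq0 i : meval (fun=> 1) ('X_i : {mpoly CC[n]}) != 0.
  by rewrite mevalXU oner_neq0.
case: (laurent_eval_eta_num one_neq0 d p N) => a [N' [Ea _]].
exists a, N'; split=> [||p_wheel x x0 x_wheel].
- apply/issymP => s; apply/eqP; rewrite -tofrac_eq -permF_tofrac.
  have -> : tofrac a = cst n d * eta_num p N * tofrac (monoN n N').
    by rewrite Ea divfK ?tofrac_monoN_neq0.
  by rewrite rmorphM rmorphM /= permF_cst permF_monoN permF_eta_num.
- by rewrite Ea.
have x_neq0 i : meval x ('X_i : {mpoly CC[n]}) != 0 by rewrite mevalXU.
have := laurent_eval_uniq x_neq0 (laurent_eval_eta_num x_neq0 d p N) Ea.
have -> : mmap (fun c => meval x c%:MP) (fun i => (meval x 'X_i)^-1) p =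
    p.@[fun i => (x i)^-1].
  rewrite mevalE; apply: eq_bigr => m _; rewrite mevalC; congr (_ * _).
  by apply: eq_bigr => i _; rewrite mevalXU.
rewrite (wheel_vanishing_inv sym_p p_wheel x0 x_wheel) !(mul0r, mulr0) => /esym/eqP.
by rewrite mulf_eq0 invr_eq0 (negbTE (h_monoN_neq0 x_neq0 N')) orbF => /eqP.
Qed.

Lemma etaMap_lin q n (a : CC) (F G : Kn n) :
  etaMap q (cst n a * F + G) = cst n a * etaMap q F + etaMap q G.
Proof. by rewrite !etaMapE rmorphD rmorphM /= invvars_cst; ring. Qed.

Lemma etaMap_inj q n : q != 0 -> injective (@etaMap q n).
Proof.
move=> q0 F G; rewrite !etaMapE => /mulfI eqFG.
by rewrite -[F]invvarsK -[G]invvarsK eqFG // mulf_neq0 ?eta_const_neq0 ?Deltaq_neq0.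
Qed.

Lemma etaMap1 q : etaMap q (1 : Kn 0) = 1.
Proof.
by rewrite etaMapE /Deltaq /eta_const big_ord0 mul0n div0n expr0 invr1 !rmorph1 !mulr1.
Qed.

Lemma etaMap_inSS q t n (p : {mpoly CC[n]}) N : p \is symmetric ->
  exists p' N', [/\ p' \is symmetric,
    etaMap q (tofrac p / (tofrac (monoN n N) * DeltaS n)) =
      tofrac p' / (tofrac (monoN n N') * DeltaDFK q n) &
    wheel_vanishing q t p -> wheel_vanishing q t p'].
Proof.
move=> sym_p; have [p' [N' [sym_p' Ep' wheel_p']]] :=
  eta_num_symmetric_numerator q t N (q ^- ((n * (n - 1)) %/ 2)) sym_p.
by exists p', N'; split; rewrite // etaMap_frac /eta_const -Ep' invfM mulrA.
Qed.

Lemma etaMap_onto_SDFK q t n (p : {mpoly CC[n]}) N : q != 0 -> p \is symmetric ->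
  exists p' N', [/\ p' \is symmetric,
    etaMap q (tofrac p' / (tofrac (monoN n N') * DeltaS n)) =
      tofrac p / (tofrac (monoN n N) * DeltaDFK q n) &
    wheel_vanishing q t p -> wheel_vanishing q t p'].
Proof.
move=> q0 sym_p; have [p' [N' [sym_p' Ep' wheel_p']]] :=
  eta_num_symmetric_numerator q t N (q ^- ((n * (n - 1)) %/ 2))^-1 sym_p.
exists p', N'; split=> //.
rewrite invfM mulrA Ep' etaMapE DeltaqE invvarsM invvarsV invvarsM invvars_cst.
rewrite invvars_eta_num fmorphV /= -/(eta_const q n).
have c0 := eta_const_neq0 q0 n; have D0 := DeltaS_neq0 n.
have iD0 := invvars_DeltaS_neq0 n.
move: (eta_const q n) (DeltaS n) (invvars (DeltaS n)) c0 D0 iD0 => c D iD c0 D0 iD0.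
transitivity (c / c * (D / D) * (iD / iD) *
  (tofrac p / tofrac (monoN n N) / DeltaDFK q n)); first by ring.
by rewrite (mulfV c0) (mulfV D0) (mulfV iD0) !mul1r invfM mulrA.
Qed.

Theorem lemma7p5 (q t : CC) (hq : q != 0) (ht : t != 0)
  (nru1 : forall m : nat, (0 < m)%N -> q1 q ^+ m != 1)
  (nru2 : forall m : nat, (0 < m)%N -> q2 t ^+ m != 1)
  (nru3 : forall m : nat, (0 < m)%N -> q3 q t ^+ m != 1) :
  (
    (* eta is C-linear in each degree *)
    (forall (n : nat) (a : CC) (F G : Kn n),
        etaMap q (cst n a * F + G) = cst n a * etaMap q F + etaMap q G) /\
    (* eta maps S_n into S^DFK_n, injectively and onto *)
    (forall (n : nat) (F : Kn n), inSS F -> inSDFK q (etaMap q F)) /\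
    (forall (n : nat) (F G : Kn n), inSS F -> inSS G -> etaMap q F = etaMap q G -> F = G) /\
    (forall (n : nat) (G : Kn n), inSDFK q G -> exists F, inSS F /\ etaMap q F = G) /\
    (* eta preserves the unit and the shuffle products *)
    etaMap q (1 : Kn 0) = 1 /\
    (forall (k l : nat) (F : Kn k) (G : Kn l), inSS F -> inSS G ->
        etaMap q (shuffleS q t F G) = shuffleDFK q t (etaMap q F) (etaMap q G)) /\
    (* eta restricts to a bijection S -> S^DFK *)
    (forall (n : nat) (F : Kn n), inWS q t F -> inWDFK q t (etaMap q F)) /\
    (forall (n : nat) (G : Kn n), inWDFK q t G -> exists F, inWS q t F /\ etaMap q F = G)).
Proof.
split; first exact: etaMap_lin.
split.
  move=> n _ [p [N [sym_p ->]]].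
  have [p' [N' [sym_p' -> _]]] := etaMap_inSS q t N sym_p.
  by exists p', N'.
split; first by move=> n F G _ _; apply: etaMap_inj.
split.
  move=> n _ [p [N [sym_p ->]]].
  have [p' [N' [sym_p' E _]]] := etaMap_onto_SDFK t N hq sym_p.
  by exists (tofrac p' / (tofrac (monoN n N') * DeltaS n)); split=> //; exists p', N'.
split; first exact: etaMap1.
split; first by move=> k l F G _ _; apply: etaMap_shuffle.
split.
  move=> n _ [p [N [sym_p -> p_wheel]]].
  have [p' [N' [sym_p' -> wheel_p']]] := etaMap_inSS q t N sym_p.
  by exists p', N'; split=> //; apply: wheel_p'.
move=> n _ [p [N [sym_p -> p_wheel]]].
have [p' [N' [sym_p' E wheel_p']]] := etaMap_onto_SDFK t N hq sym_p.
exists (tofrac p' / (tofrac (monoN n N') * DeltaS n)); split=> //.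
by exists p', N'; split=> //; apply: wheel_p'.
Qed.
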